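(* Let $\phi_M$ be a formula of MITL$(\Diamond)$ and $\phi_M'$ a formula of MITL$(\Box)$, and let $\phi_L=[\phi_M]_{LTL}$ and $\phi_L'=[\phi_M']_{LTL}$ be the LTL formulas obtained by deleting all interval subscripts. Then: (1) if $\phi_L$ is unsatisfiable, then $\phi_M$ is unsatisfiable; (2) if $\phi_L'$ is satisfiable, then $\phi_M'$ is satisfiable.
   Context: Fix $T\in\mathbb{R}_+$ and a set $AP$ of atomic propositions. A timed trace is a map $\mu:[0,T]\to 2^{AP}$ satisfying the finite variability condition. Fragments (all in negation normal form), with $p\in AP$ and $I$ a non-singleton right-closed interval over $\mathbb{Q}_+$ with defined endpoints: MITL$(\Box)$: $\varphi::=\top\mid\bot\mid p\mid\neg p\mid\varphi_1\wedge\varphi_2\mid\varphi_1\vee\varphi_2\mid\Box_I\varphi_1$; MITL$(\Diamond)$: same with $\Diamond_I\varphi_1$ in place of $\Box_I\varphi_1$; LTL$(\Box)$ and LTL$(\Diamond)$: same with unsubscripted $\Box\varphi_1$, resp. $\Diamond\varphi_1$. MITL semantics: $(\mu,t)\models p$ iff $p\in\mu(t)$, $\neg p$ iff $p\notin\mu(t)$, $\top$ always, $\bot$ never, $\wedge,\vee$ as usual, $(\mu,t)\models\Diamond_I\varphi$ iff $\exists t'\in(t+I)\cap[0,T]$ with $(\mu,t')\models\varphi$, $(\mu,t)\models\Box_I\varphi$ iff $\forall t'\in(t+I)\cap[0,T]$, $(\mu,t')\models\varphi$, where $t+[l,u]=[t+l,t+u]$. LTL (continuous, bounded) semantics: same propositional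 clauses, $(\mu,t)\models\Diamond\varphi$ iff $\exists t'\in[t,T]$ with $(\mu,t')\models\varphi$, $(\mu,t)\models\Box\varphi$ iff $\forall t'\in[t,T]$, $(\mu,t')\models\varphi$. $[\phi]_{LTL}$ replaces every $\Diamond_I$ by $\Diamond$ and every $\Box_I$ by $\Box$. $\mu\models\varphi$ iff $(\mu,0)\models\varphi$; a formula is satisfiable iff some timed trace satisfies it. *)

From Stdlib Require Import Reals QArith Qreals.
Open Scope R_scope.

(* A timed trace over atomic propositions AP on [0,T]: values outside [0,T]
   are irrelevant.  mu t p  means  p \in mu(t). *)
Definition trace (AP : Type) := R -> AP -> Prop.

Definition finitely_variable (AP : Type) (T : R) (mu : trace AP) : Prop :=
  exists (n : nat) (tau : nat -> R),
    tau 0%nat = 0 /\ tau n = T /\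
    (forall i, (i < n)%nat -> tau i < tau (S i)) /\
    (forall i, (i < n)%nat -> forall t t',
        tau i < t < tau (S i) -> tau i < t' < tau (S i) ->
        forall p, mu t p <-> mu t' p).

Definition timed_trace (AP : Type) (T : R) (mu : trace AP) : Prop :=
  finitely_variable AP T mu.

(* Non-singleton right-closed interval over Q_+ with finite endpoints:
   [lo, hi] (lclosed = true) or (lo, hi] (lclosed = false), 0 <= lo < hi. *)
Record interval := Interval {
  lo : Q; hi : Q; lclosed : bool;
  lo_nonneg : (0 <= lo)%Q;
  lo_lt_hi : (lo < hi)%Q }.

Definition in_shift (t : R) (I : interval) (t' : R) : Prop :=
  (if lclosed I then t + Q2R (lo I) <= t' else t + Q2R (lo I) < t')
  /\ t' <= t + Q2R (hi I).

Inductive mitl (AP : Type) : Type :=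
| MTrue | MFalse | MAtom (p : AP) | MNAtom (p : AP)
| MAnd (f g : mitl AP) | MOr (f g : mitl AP)
| MDia (I : interval) (f : mitl AP)
| MBox (I : interval) (f : mitl AP).
Arguments MTrue {AP}. Arguments MFalse {AP}. Arguments MAtom {AP}. Arguments MNAtom {AP}.
Arguments MAnd {AP}. Arguments MOr {AP}. Arguments MDia {AP}. Arguments MBox {AP}.

Inductive ltl (AP : Type) : Type :=
| LTrue | LFalse | LAtom (p : AP) | LNAtom (p : AP)
| LAnd (f g : ltl AP) | LOr (f g : ltl AP)
| LDia (f : ltl AP)
| LBox (f : ltl AP).
Arguments LTrue {AP}. Arguments LFalse {AP}. Arguments LAtom {AP}. Arguments LNAtom {AP}.
Arguments LAnd {AP}. Arguments LOr {AP}. Arguments LDia {AP}. Arguments LBox {AP}.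

Fixpoint is_mitl_dia {AP} (f : mitl AP) : Prop :=
  match f with
  | MTrue | MFalse | MAtom _ | MNAtom _ => True
  | MAnd g h | MOr g h => is_mitl_dia g /\ is_mitl_dia h
  | MDia _ g => is_mitl_dia g
  | MBox _ _ => False
  end.

Fixpoint is_mitl_box {AP} (f : mitl AP) : Prop :=
  match f with
  | MTrue | MFalse | MAtom _ | MNAtom _ => True
  | MAnd g h | MOr g h => is_mitl_box g /\ is_mitl_box h
  | MDia _ _ => False
  | MBox _ g => is_mitl_box g
  end.

Fixpoint to_ltl {AP} (f : mitl AP) : ltl AP :=
  match f with
  | MTrue => LTrue
  | MFalse => LFalse
  | MAtom p => LAtom p
  | MNAtom p => LNAtom p
  | MAnd g h => LAnd (to_ltl g) (to_ltl h)
  | MOr g h => LOr (to_ltl g) (to_ltl h)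
  | MDia _ g => LDia (to_ltl g)
  | MBox _ g => LBox (to_ltl g)
  end.

Fixpoint sat_mitl {AP} (T : R) (mu : trace AP) (t : R) (f : mitl AP) : Prop :=
  match f with
  | MTrue => True
  | MFalse => False
  | MAtom p => mu t p
  | MNAtom p => ~ mu t p
  | MAnd g h => sat_mitl T mu t g /\ sat_mitl T mu t h
  | MOr g h => sat_mitl T mu t g \/ sat_mitl T mu t h
  | MDia J g => exists t', in_shift t J t' /\ 0 <= t' <= T /\ sat_mitl T mu t' g
  | MBox J g => forall t', in_shift t J t' -> 0 <= t' <= T -> sat_mitl T mu t' g
  end.

Fixpoint sat_ltl {AP} (T : R) (mu : trace AP) (t : R) (f : ltl AP) : Prop :=
  match f with
  | LTrue => True
  | LFalse => False
  | LAtom p => mu t p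
  | LNAtom p => ~ mu t p
  | LAnd g h => sat_ltl T mu t g /\ sat_ltl T mu t h
  | LOr g h => sat_ltl T mu t g \/ sat_ltl T mu t h
  | LDia g => exists t', t <= t' <= T /\ sat_ltl T mu t' g
  | LBox g => forall t', t <= t' <= T -> sat_ltl T mu t' g
  end.

Definition mitl_satisfiable {AP} (T : R) (f : mitl AP) : Prop :=
  exists mu : trace AP, timed_trace AP T mu /\ sat_mitl T mu 0 f.

Definition ltl_satisfiable {AP} (T : R) (f : ltl AP) : Prop :=
  exists mu : trace AP, timed_trace AP T mu /\ sat_ltl T mu 0 f.

(* Every time point in t + I lies in [t, oo), because I is contained in the
   nonnegative reals.  Hence a bounded diamond witness is also an unbounded
   one, and an unbounded box constrains every point a bounded box does: by
   structural induction, MITL(Diamond) formulas imply their LTL erasure and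
   MITL(Box) formulas are implied by theirs, pointwise on every trace. *)

From Stdlib Require Import Reals QArith Qreals Lra.
Open Scope R_scope.

Lemma Q2R_lo_nonneg (I : interval) : 0 <= Q2R (lo I).
Proof.
  pose proof (Qle_Rle _ _ (lo_nonneg I)) as H.
  unfold Q2R in H at 1; simpl in H; lra.
Qed.

Lemma in_shift_ge (t : R) (I : interval) (t' : R) : in_shift t I t' -> t <= t'.
Proof.
  unfold in_shift; pose proof (Q2R_lo_nonneg I).
  destruct (lclosed I); intros [Hlo _]; lra.
Qed.

Section Erasure.

Variables (AP : Type) (T : R) (mu : trace AP).

Lemma sat_mitl_dia_to_ltl (f : mitl AP) : is_mitl_dia f ->
  forall t, sat_mitl T mu t f -> sat_ltl T mu t (to_ltl f).
Proof.
  induction f as [| | p | p | f IHf g IHg | f IHf g IHg | I f IHf | I f IHf];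
    simpl; intros Hf t Hsat; try tauto.
  - destruct Hf, Hsat; split; auto.
  - destruct Hf, Hsat; [left | right]; auto.
  - destruct Hsat as [t' [Hshift [Hrange Ht']]].
    pose proof (in_shift_ge _ _ _ Hshift).
    exists t'; split; [lra | auto].
Qed.

Lemma sat_ltl_to_mitl_box (f : mitl AP) : is_mitl_box f ->
  forall t, sat_ltl T mu t (to_ltl f) -> sat_mitl T mu t f.
Proof.
  induction f as [| | p | p | f IHf g IHg | f IHf g IHg | I f IHf | I f IHf];
    simpl; intros Hf t Hsat; try tauto.
  - destruct Hf, Hsat; split; auto.
  - destruct Hf, Hsat; [left | right]; auto.
  - intros t' Hshift Hrange.
    pose proof (in_shift_ge _ _ _ Hshift).
    apply IHf; [exact Hf |]; apply Hsat; lra.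
Qed.

End Erasure.

Lemma mitl_dia_satisfiable_to_ltl (AP : Type) (T : R) (f : mitl AP) :
  is_mitl_dia f -> mitl_satisfiable T f -> ltl_satisfiable T (to_ltl f).
Proof.
  intros Hf [mu [Hmu Hsat]].
  exists mu; split; [exact Hmu |].
  exact (sat_mitl_dia_to_ltl AP T mu f Hf 0 Hsat).
Qed.

Lemma ltl_satisfiable_to_mitl_box (AP : Type) (T : R) (f : mitl AP) :
  is_mitl_box f -> ltl_satisfiable T (to_ltl f) -> mitl_satisfiable T f.
Proof.
  intros Hf [mu [Hmu Hsat]].
  exists mu; split; [exact Hmu |].
  exact (sat_ltl_to_mitl_box AP T mu f Hf 0 Hsat).
Qed.

Theorem theorem3 (AP : Type) (T : R) (hT : 0 <= T)
  (phiM phiM' : mitl AP) :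
  is_mitl_dia phiM -> is_mitl_box phiM' ->
  (~ ltl_satisfiable T (to_ltl phiM) -> ~ mitl_satisfiable T phiM) /\
  (ltl_satisfiable T (to_ltl phiM') -> mitl_satisfiable T phiM').
Proof.
  intros Hdia Hbox; split.
  - intros Hunsat Hsat.
    exact (Hunsat (mitl_dia_satisfiable_to_ltl AP T phiM Hdia Hsat)).
  - exact (ltl_satisfiable_to_mitl_box AP T phiM' Hbox).
Qed.
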